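(* Let $N\ge 1$, let $a\in\mathbb{R}^N$ with $a_i\neq 0$ for all $i$, and let $\underline x,\overline x,\underline y,\overline y\in\mathbb{R}^N$ with $\underline x<\overline x$ and $\underline y<\overline y$ componentwise. Let $$\mathcal{S}_a=\Big\{(x,y)\in\mathbb{R}^N\times\mathbb{R}^N:\ \sum_{i=1}^N a_ix_iy_i=0,\ \underline x\le x\le\overline x,\ \underline y\le y\le\overline y\Big\}.$$ Then $\operatorname{conv}(\mathcal{S}_a)$ is second-order cone representable.
   Context: A set $S\subseteq\mathbb{R}^n$ is second-order cone representable if it is the projection onto the first $n$ coordinates of a set $\{(x,u)\in\mathbb{R}^n\times\mathbb{R}^m\}$ defined by finitely many linear equalities/inequalities and constraints of the form $\|A_k(x,u)+b_k\|_2\le c_k^T(x,u)+d_k$. *)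

From Stdlib Require Import Reals.
From mathcomp Require Import all_boot.
Set Implicit Arguments. Unset Strict Implicit. Unset Printing Implicit Defensive.
Local Open Scope R_scope.

Definition vec (n : nat) := 'I_n -> R.

Definition rsum (n : nat) (F : 'I_n -> R) : R := \big[Rplus/0]_(i < n) F i.

Definition dotv (n : nat) (u v : vec n) : R := rsum (fun i => u i * v i).

Definition norm2 (n : nat) (v : vec n) : R := sqrt (rsum (fun i => v i * v i)).

(* An affine form in (x,u) in R^n x R^m : (coefficients on x, coefficients on u, constant) *)
Definition affform (n m : nat) := ((vec n * vec m) * R)%type.

Definition eval_aff (n m : nat) (f : affform n m) (x : vec n) (u : vec m) : R :=
  dotv f.1.1 x + dotv f.1.2 u + f.2.

(* Second-order cone representable set S ⊆ R^n: projection onto x of a set of (x,u)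
   defined by finitely many linear equalities, linear inequalities, and
   second-order cone constraints ||A_k(x,u)+b_k||_2 <= c_k^T(x,u)+d_k
   (the affine map A_k(x,u)+b_k : R^n x R^m -> R^(d k) is given row by row). *)
Definition SOC_representable (n : nat) (S : vec n -> Prop) : Prop :=
  exists (m p q r : nat)
         (E : 'I_p -> affform n m)
         (I : 'I_q -> affform n m)
         (d : 'I_r -> nat)
         (A : forall k : 'I_r, 'I_(d k) -> affform n m)
         (c : 'I_r -> affform n m),
    forall x : vec n,
      S x <->
      exists u : vec m,
        (forall j, eval_aff (E j) x u = 0) /\
        (forall j, eval_aff (I j) x u <= 0) /\
        (forall k, norm2 (fun i => eval_aff (A k i) x u) <= eval_aff (c k) x u).

Definition conv (n : nat) (S : vec n -> Prop) : vec n -> Prop :=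
  fun z => exists (k : nat) (lam : 'I_k -> R) (p : 'I_k -> vec n),
    (forall j, 0 <= lam j) /\ rsum lam = 1 /\ (forall j, S (p j)) /\
    (forall i, z i = rsum (fun j => lam j * p j i)).

(* A point of R^N x R^N is stored as a vector of R^(N+N): first block x, second y *)
Definition xpart (N : nat) (z : vec (N + N)) : vec N := fun i => z (lshift N i).
Definition ypart (N : nat) (z : vec (N + N)) : vec N := fun i => z (rshift N i).

Definition S_a (N : nat) (a xl xu yl yu : vec N) : vec (N + N) -> Prop :=
  fun z =>
    rsum (fun i => a i * xpart z i * ypart z i) = 0 /\
    (forall i, xl i <= xpart z i <= xu i) /\
    (forall i, yl i <= ypart z i <= yu i).

From Stdlib Require Import Reals Lra Psatz Classical FunctionalExtensionality ClassicalEpsilon.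
From mathcomp Require Import all_boot Rstruct.
Set Implicit Arguments. Unset Strict Implicit. Unset Printing Implicit Defensive.
Local Open Scope R_scope.

(* Let z = (x, y) be in S_a. If two entries x_i, x_j are strictly inside their
   bounds, moving x along a_j y_j e_i - a_i y_i e_j keeps sum_k a_k x_k y_k
   constant, so z lies on a segment of S_a whose endpoints have one more entry
   at a bound; the same holds for y. Iterating, every point of S_a is a convex
   combination of points of two kinds:
   - for every k, x_k or y_k is at a bound or 0: the bilinear equation becomes
     linear, and these points fill finitely many polytopes;
   - all entries but x_i, y_i are at bounds: then x_i y_i = kappa is constant,
     and with s = +-x_i, t = +-y_i > 0 the points fill a hyperbola arc
     s t = kappa, alpha <= s <= beta, whose convex hull is cut out by the
     rotated cone kappa <= s t and the chord through its endpoints.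
   Each of these finitely many pieces is SOC-representable together with its
   homogenization, and Balas' disjunctive formulation then represents the
   convex hull of their union. *)

Lemma rsum_add n (F G : 'I_n -> R) : rsum (fun i => F i + G i) = rsum F + rsum G.
Proof. by rewrite /rsum big_split. Qed.

Lemma rsum_scal n c (F : 'I_n -> R) : rsum (fun i => c * F i) = c * rsum F.
Proof. by rewrite /rsum big_distrr. Qed.

Lemma rsum_ext n (F G : 'I_n -> R) : (forall i, F i = G i) -> rsum F = rsum G.
Proof. by move=> FG; rewrite /rsum; apply: eq_bigr => i _. Qed.

Lemma rsum0 n : rsum (fun _ : 'I_n => 0) = 0.
Proof. by rewrite /rsum big1. Qed.

Lemma rsum_ord0 (F : 'I_0 -> R) : rsum F = 0.
Proof. by rewrite /rsum big_ord0. Qed.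

Lemma rsumS n (F : 'I_n.+1 -> R) :
  rsum F = rsum (fun i : 'I_n => F (widen_ord (leqnSn n) i)) + F ord_max.
Proof. by rewrite /rsum big_ord_recr. Qed.

Lemma rsum_split n k (F : 'I_(n + k) -> R) :
  rsum F = rsum (fun i => F (lshift k i)) + rsum (fun j => F (rshift n j)).
Proof. by rewrite /rsum big_split_ord. Qed.

Lemma rsum_pick n (i0 : 'I_n) (F : 'I_n -> R) :
  rsum (fun i => if i == i0 then F i else 0) = F i0.
Proof. by rewrite /rsum -big_mkcond big_pred1_eq. Qed.

Lemma rsum_D1 n (i0 : 'I_n) (F : 'I_n -> R) :
  rsum F = F i0 + rsum (fun i => if i == i0 then 0 else F i).
Proof.
rewrite /rsum (bigD1 i0) //=; congr (_ + _).
by rewrite [in RHS](bigD1 i0) //= eqxx Rplus_0_l; apply: eq_bigr => i /negbTE ->.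
Qed.

Lemma rsum_pick2 (n : nat) (i j : 'I_n) (P Q : R) (F : 'I_n -> R) : i != j ->
  rsum (fun k => F k * (if k == i then P else if k == j then Q else 0)) = F i * P + F j * Q.
Proof.
move=> ij; rewrite -(rsum_pick i (fun k => F k * P)) -(rsum_pick j (fun k => F k * Q)).
rewrite -rsum_add; apply: rsum_ext => k.
case: (eqVneq k i) => [->|ki]; first by rewrite (negbTE ij); ring.
by case: (eqVneq k j) => [->|kj]; ring.
Qed.

(** * Vectors and affine functions *)

Definition gcat T n k (x : 'I_n -> T) (y : 'I_k -> T) : 'I_(n + k) -> T :=
  fun c => match split c with inl i => x i | inr j => y j end.
Notation vcat := (@gcat R).
Definition vl n k (v : vec (n + k)) : vec n := fun i => v (lshift k i).
Definition vr n k (v : vec (n + k)) : vec k := fun j => v (rshift n j).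

Lemma gcatL T n k (x : 'I_n -> T) (y : 'I_k -> T) i : gcat x y (lshift k i) = x i.
Proof. by rewrite /gcat (unsplitK (inl i : 'I_n + 'I_k)). Qed.

Lemma gcatR T n k (x : 'I_n -> T) (y : 'I_k -> T) j : gcat x y (rshift n j) = y j.
Proof. by rewrite /gcat (unsplitK (inr j : 'I_n + 'I_k)). Qed.

Lemma vl_vcat n k (x : vec n) (y : vec k) : vl (vcat x y) = x.
Proof. by apply: functional_extensionality => i; rewrite /vl gcatL. Qed.

Lemma vr_vcat n k (x : vec n) (y : vec k) : vr (vcat x y) = y.
Proof. by apply: functional_extensionality => i; rewrite /vr gcatR. Qed.

Lemma dotv_split n k (g x : vec (n + k)) :
  dotv g x = dotv (vl g) (vl x) + dotv (vr g) (vr x).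
Proof. by rewrite /dotv rsum_split. Qed.

Lemma dotv_vcat n k (g x : vec n) (h y : vec k) :
  dotv (vcat g h) (vcat x y) = dotv g x + dotv h y.
Proof. by rewrite dotv_split !vl_vcat !vr_vcat. Qed.

Lemma dotv0l n (x : vec n) : dotv (fun _ => 0) x = 0.
Proof. by rewrite /dotv -[RHS](rsum0 n); apply: rsum_ext => i; lra. Qed.

Lemma dotv_vec0 (g x : vec 0) : dotv g x = 0.
Proof. exact: rsum_ord0. Qed.

Lemma dotvDl n (f g x : vec n) : dotv (fun i => f i + g i) x = dotv f x + dotv g x.
Proof. by rewrite /dotv -rsum_add; apply: rsum_ext => i; lra. Qed.

Lemma dotvZl n c (f x : vec n) : dotv (fun i => c * f i) x = c * dotv f x.
Proof. by rewrite /dotv -rsum_scal; apply: rsum_ext => i; lra. Qed.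

Lemma dotv_delta n (c0 : 'I_n) (x : vec n) :
  dotv (fun c => if c == c0 then 1 else 0) x = x c0.
Proof. by rewrite /dotv -(rsum_pick c0 x); apply: rsum_ext => i; case: (i == c0); lra. Qed.

Lemma dotv_comp n k (h : vec k) (F : 'I_k -> vec n) (g : vec k) (x : vec n) :
  dotv h (fun j => dotv (F j) x + g j) =
  dotv (fun i => rsum (fun j => h j * F j i)) x + rsum (fun j => h j * g j).
Proof.
rewrite /dotv /rsum.
under eq_bigr => j _ do rewrite Rmult_plus_distr_l.
rewrite big_split /=; congr (_ + _).
under eq_bigr => j _ do rewrite big_distrr /=.
rewrite exchange_big /=; apply: eq_bigr => i _.
by rewrite big_distrl /=; apply: eq_bigr => j _; lra.
Qed.

Definition affine n (L : vec n -> R) := exists f b, forall x, L x = dotv f x + b.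

Lemma affine_ext n (L L' : vec n -> R) : (forall x, L x = L' x) -> affine L -> affine L'.
Proof. by move=> E [f [b H]]; exists f, b => x; rewrite -E. Qed.

Lemma affine_const n b : affine (fun _ : vec n => b).
Proof. by exists (fun _ => 0), b => x; rewrite dotv0l; lra. Qed.

Lemma affine_coord n (c : 'I_n) : affine (fun x : vec n => x c).
Proof. by exists (fun i => if i == c then 1 else 0), 0 => x; rewrite dotv_delta; lra. Qed.

Lemma affineD n (L M : vec n -> R) : affine L -> affine M -> affine (fun x => L x + M x).
Proof.
move=> [f [b H]] [g [e K]]; exists (fun i => f i + g i), (b + e) => x.
by rewrite dotvDl H K; lra.
Qed.

Lemma affineZ n c (L : vec n -> R) : affine L -> affine (fun x => c * L x).
Proof. by move=> [f [b H]]; exists (fun i => c * f i), (c * b) => x; rewrite dotvZl H; lra. Qed.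

Lemma affineZr n c (L : vec n -> R) : affine L -> affine (fun x => L x * c).
Proof. by move=> /(affineZ c); apply: affine_ext => x; lra. Qed.

Lemma affineB n (L M : vec n -> R) : affine L -> affine M -> affine (fun x => L x - M x).
Proof.
move=> HL /(affineZ (-1)) HM; apply: affine_ext (affineD HL HM) => x; lra.
Qed.

Lemma affine_sum n M (L : 'I_M -> vec n -> R) :
  (forall j, affine (L j)) -> affine (fun x => rsum (fun j => L j x)).
Proof.
elim: M L => [|M IH] L H.
  by apply: affine_ext (affine_const _ 0) => x; rewrite rsum_ord0.
apply: affine_ext (affineD (IH _ (fun j => H (widen_ord (leqnSn M) j))) (H ord_max)).
by move=> x; rewrite [in RHS]rsumS.
Qed.

Lemma fin_choice T (M : nat) (P : 'I_M -> T -> Prop) :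
  (forall j, exists t, P j t) -> exists F : 'I_M -> T, forall j, P j (F j).
Proof.
move=> H; exists (fun j => proj1_sig (constructive_indefinite_description _ (H j))) => j.
exact: proj2_sig (constructive_indefinite_description _ (H j)).
Qed.

Lemma affine_family n k (G : vec n -> vec k) : (forall j, affine (fun x => G x j)) ->
  exists (F : 'I_k -> vec n) (g : vec k), forall x, G x = (fun j => dotv (F j) x + g j).
Proof.
move=> HG.
have [Fg HF] : exists Fg : 'I_k -> vec n * R, forall j x, G x j = dotv (Fg j).1 x + (Fg j).2.
  apply: (@fin_choice _ k (fun j (p : vec n * R) => forall x, G x j = dotv p.1 x + p.2)) => j.
  by have [f [b Hf]] := HG j; exists (f, b).
exists (fun j => (Fg j).1), (fun j => (Fg j).2) => x.
by apply: functional_extensionality => j; rewrite HF.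
Qed.

(** * Second-order cone representations *)

(* Constraint lists combine more easily than the indexed families of
   [SOC_representable]; [SOCr_SOC_representable] converts back. *)
Definition soc_con n m := ({d : nat & 'I_d -> affform n m} * affform n m)%type.

Record soc_system n m := SocSystem {
  sys_eqs : seq (affform n m);
  sys_les : seq (affform n m);
  sys_socs : seq (soc_con n m) }.

Definition soc_sat n m (s : soc_con n m) (x : vec n) (u : vec m) :=
  norm2 (fun i => eval_aff (projT2 s.1 i) x u) <= eval_aff s.2 x u.

Definition holds n m (S : soc_system n m) (x : vec n) (u : vec m) :=
  (forall f, List.In f (sys_eqs S) -> eval_aff f x u = 0) /\
  (forall f, List.In f (sys_les S) -> eval_aff f x u <= 0) /\
  (forall s, List.In s (sys_socs S) -> soc_sat s x u).

Definition SOCr n (P : vec n -> Prop) :=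
  exists m (S : soc_system n m), forall x, P x <-> exists u, holds S x u.

Lemma In_nthP T (d0 : T) (s : seq T) (P : T -> Prop) :
  (forall j : 'I_(size s), P (nth d0 s j)) <-> (forall f, List.In f s -> P f).
Proof.
split.
  move=> H f; elim: s H => [|z s IH] //= H [<-|Hf]; first exact: (H ord0).
  by apply: IH => // j; apply: (H (lift ord0 j)).
move=> H [j /= Hj]; apply: H; elim: s j Hj => [|z s IH] [|j] //= Hj.
  by left.
by right; apply: IH.
Qed.

Lemma SOCr_SOC_representable n (P : vec n -> Prop) : SOCr P -> SOC_representable P.
Proof.
move=> [m [S H]].
pose f0 : affform n m := ((fun _ => 0, fun _ => 0), 0).
pose s0 : soc_con n m := (existT _ 0%N (fun _ => f0), f0).
exists m, (size (sys_eqs S)), (size (sys_les S)), (size (sys_socs S)),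
  (fun j => nth f0 (sys_eqs S) j), (fun j => nth f0 (sys_les S) j),
  (fun k => projT1 (nth s0 (sys_socs S) k).1), (fun k => projT2 (nth s0 (sys_socs S) k).1),
  (fun k => (nth s0 (sys_socs S) k).2) => x.
rewrite H; split=> -[u [H1 [H2 H3]]]; exists u; split; try split.
- exact: (proj2 (In_nthP f0 _ (fun f => eval_aff f x u = 0)) H1).
- exact: (proj2 (In_nthP f0 _ (fun f => eval_aff f x u <= 0)) H2).
- exact: (proj2 (In_nthP s0 _ (fun s => soc_sat s x u)) H3).
- exact: (proj1 (In_nthP f0 _ (fun f => eval_aff f x u = 0)) H1).
- exact: (proj1 (In_nthP f0 _ (fun f => eval_aff f x u <= 0)) H2).
- exact: (proj1 (In_nthP s0 _ (fun s => soc_sat s x u)) H3).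
Qed.

Lemma norm2_ext d (f g : vec d) : (forall i, f i = g i) -> norm2 f = norm2 g.
Proof. by move=> H; rewrite /norm2; congr sqrt; apply: rsum_ext => i; rewrite H. Qed.

Definition map_soc_con n m n' m' (tr : affform n m -> affform n' m') (s : soc_con n m) :
  soc_con n' m' := (existT _ (projT1 s.1) (fun i => tr (projT2 s.1 i)), tr s.2).

Definition map_system n m n' m' (tr : affform n m -> affform n' m') (S : soc_system n m) :=
  SocSystem (map tr (sys_eqs S)) (map tr (sys_les S)) (map (map_soc_con tr) (sys_socs S)).

Lemma In_map T U (f : T -> U) (s : seq T) y :
  List.In y (map f s) <-> exists x, List.In x s /\ f x = y.
Proof.
elim: s => [|z s IH] /=; first by split=> // -[x []].
split.
  by case=> [<-|/IH [x [H1 H2]]]; [exists z | exists x]; auto.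
by case=> x [[->|H1] H2]; [left | right; apply/IH; exists x].
Qed.

Lemma holds_map n m n' m' (tr : affform n m -> affform n' m') S x u x' u' :
  (forall f, eval_aff (tr f) x' u' = eval_aff f x u) ->
  (holds (map_system tr S) x' u' <-> holds S x u).
Proof.
move=> E.
have Esoc s : soc_sat (map_soc_con tr s) x' u' <-> soc_sat s x u.
  by rewrite /soc_sat /= E (norm2_ext (g := fun i => eval_aff (projT2 s.1 i) x u)).
rewrite /holds /=; split=> -[H1 [H2 H3]]; split; [|split| |split].
- by move=> f Hf; rewrite -E; apply: H1; apply/In_map; exists f.
- by move=> f Hf; rewrite -E; apply: H2; apply/In_map; exists f.
- by move=> s Hs; apply/Esoc; apply: H3; apply/In_map; exists s.
- by move=> f /In_map [g [Hg <-]]; rewrite E; apply: H1.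
- by move=> f /In_map [g [Hg <-]]; rewrite E; apply: H2.
- by move=> s /In_map [t [Ht <-]]; apply/Esoc; apply: H3.
Qed.

Definition cat_system n m (S1 S2 : soc_system n m) :=
  SocSystem (sys_eqs S1 ++ sys_eqs S2) (sys_les S1 ++ sys_les S2) (sys_socs S1 ++ sys_socs S2).

Lemma In_cat T (s1 s2 : seq T) y : List.In y (s1 ++ s2) <-> List.In y s1 \/ List.In y s2.
Proof. by elim: s1 => [|z s IH] /=; [tauto | rewrite IH; tauto]. Qed.

Lemma holds_cat n m (S1 S2 : soc_system n m) x u :
  holds (cat_system S1 S2) x u <-> holds S1 x u /\ holds S2 x u.
Proof.
rewrite /holds /=; split.
  move=> [H1 [H2 H3]]; split; split; try split; move=> f Hf;
    [apply: H1|apply: H2|apply: H3|apply: H1|apply: H2|apply: H3]; apply/In_cat; tauto.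
by move=> [[H1 [H2 H3]] [K1 [K2 K3]]]; split; [|split] => f /In_cat [] ?; auto.
Qed.

Lemma SOCr_ext n (P Q : vec n -> Prop) : (forall x, P x <-> Q x) -> SOCr P -> SOCr Q.
Proof. by move=> E [m [S H]]; exists m, S => x; rewrite -E. Qed.

Definition lift_auxl n m1 m2 (f : affform n m1) : affform n (m1 + m2) :=
  ((f.1.1, vcat f.1.2 (fun _ => 0)), f.2).
Definition lift_auxr n m1 m2 (f : affform n m2) : affform n (m1 + m2) :=
  ((f.1.1, vcat (fun _ => 0) f.1.2), f.2).

Lemma SOCr_and n (P Q : vec n -> Prop) : SOCr P -> SOCr Q -> SOCr (fun x => P x /\ Q x).
Proof.
move=> [m1 [S1 H1]] [m2 [S2 H2]].
exists (m1 + m2)%N,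
  (cat_system (map_system (@lift_auxl n m1 m2) S1) (map_system (@lift_auxr n m1 m2) S2)).
have E1 x u f : eval_aff (@lift_auxl n m1 m2 f) x u = eval_aff f x (vl u).
  by rewrite /eval_aff /= (dotv_split (vcat _ _)) vl_vcat vr_vcat dotv0l Rplus_0_r.
have E2 x u f : eval_aff (@lift_auxr n m1 m2 f) x u = eval_aff f x (vr u).
  by rewrite /eval_aff /= (dotv_split (vcat _ _)) vl_vcat vr_vcat dotv0l Rplus_0_l.
move=> x; rewrite H1 H2; split.
  move=> [[u1 K1] [u2 K2]]; exists (vcat u1 u2); apply/holds_cat.
  rewrite (holds_map _ (E1 x _)) (holds_map _ (E2 x _)).
  by rewrite vl_vcat vr_vcat.
move=> [u /holds_cat [K1 K2]].
by split; [exists (vl u); move: K1; rewrite (holds_map _ (E1 x u))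
           | exists (vr u); move: K2; rewrite (holds_map _ (E2 x u))].
Qed.

Definition absorb_aux n k m (f : affform (n + k) m) : affform n (k + m) :=
  ((vl f.1.1, vcat (vr f.1.1) f.1.2), f.2).

Lemma SOCr_exists n k (P : vec (n + k) -> Prop) :
  SOCr P -> SOCr (fun x => exists y, P (vcat x y)).
Proof.
move=> [m [S H]]; exists (k + m)%N, (map_system (@absorb_aux n k m) S).
have E x y u f : eval_aff (@absorb_aux n k m f) x (vcat y u) = eval_aff f (vcat x y) u.
  by rewrite /eval_aff /= dotv_vcat (dotv_split f.1.1) vl_vcat vr_vcat; lra.
move=> x; split.
  by move=> [y /H [u Hu]]; exists (vcat y u); rewrite (holds_map _ (E x y u)).
move=> [v]; rewrite -[v](@functional_extensionality _ _ (vcat (vl v) (vr v))).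
  by rewrite (holds_map _ (E _ _ _)) => Hv; exists (vl v); apply/H; exists (vr v).
by move=> c; rewrite /gcat /vl /vr; case: split_ordP => j ->.
Qed.

Definition subst_aux n k m (F : 'I_k -> vec n) (g : vec k) (f : affform k m) : affform n m :=
  ((fun i => rsum (fun j => f.1.1 j * F j i), f.1.2), f.2 + rsum (fun j => f.1.1 j * g j)).

Lemma SOCr_comp n k (P : vec k -> Prop) (G : vec n -> vec k) :
  (forall j, affine (fun x => G x j)) -> SOCr P -> SOCr (fun x => P (G x)).
Proof.
move=> /affine_family [F [g EG]] [m [S H]].
exists m, (map_system (subst_aux F g) S) => x; rewrite EG H.
have E (u : vec m) (f : affform k m) : eval_aff (subst_aux F g f) x u = eval_aff f (fun j => dotv (F j) x + g j) u.
  by rewrite /eval_aff /subst_aux /= dotv_comp; lra.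
by split=> -[u Hu]; exists u; move: Hu; rewrite (holds_map _ (E u)).
Qed.

Definition aff_of n (f : vec n) (b : R) : affform n 0 := ((f, fun _ => 0), b).

Lemma eval_aff_of n f b (x : vec n) (u : vec 0) : eval_aff (aff_of f b) x u = dotv f x + b.
Proof. by rewrite /eval_aff /= dotv_vec0; lra. Qed.

Lemma SOCr_true n : SOCr (fun _ : vec n => True).
Proof.
exists 0%N, (SocSystem [::] [::] [::]) => x; split => // _.
by exists (fun _ => 0); split; [|split] => f.
Qed.

Lemma SOCr_eq0 n (L : vec n -> R) : affine L -> SOCr (fun x => L x = 0).
Proof.
move=> [f [b H]]; exists 0%N, (SocSystem [:: aff_of f b] [::] [::]) => x; split.
  move=> E; exists (fun _ => 0); split; [|split] => //= g; case=> // <-.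
  by rewrite eval_aff_of -H.
by move=> [u [H1 _]]; rewrite H -(eval_aff_of f b x u); apply: H1; left.
Qed.

Lemma SOCr_le0 n (L : vec n -> R) : affine L -> SOCr (fun x => L x <= 0).
Proof.
move=> [f [b H]]; exists 0%N, (SocSystem [::] [:: aff_of f b] [::]) => x; split.
  move=> E; exists (fun _ => 0); split; [|split] => //= g; case=> // <-.
  by rewrite eval_aff_of -H.
by move=> [u [_ [H1 _]]]; rewrite H -(eval_aff_of f b x u); apply: H1; left.
Qed.

Lemma SOCr_norm2_le n d (L : 'I_d -> vec n -> R) (M : vec n -> R) :
  (forall i, affine (L i)) -> affine M -> SOCr (fun x => norm2 (fun i => L i x) <= M x).
Proof.
move=> /affine_family [F [g EL]] [f [b HM]].
pose s : soc_con n 0 := (existT _ d (fun i => aff_of (F i) (g i)), aff_of f b).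
exists 0%N, (SocSystem [::] [::] [:: s]) => x.
have Es u : soc_sat s x u <-> norm2 (fun i => L i x) <= M x.
  rewrite /soc_sat /= eval_aff_of -HM EL.
  by rewrite (norm2_ext (g := fun i => dotv (F i) x + g i)) // => i; rewrite eval_aff_of.
split.
  by move=> E; exists (fun _ => 0); split; [|split] => //= t [<-|] //; apply/Es.
by move=> [u [_ [_ H1]]]; apply/(Es u)/H1; left.
Qed.

Lemma SOCr_le n (L M : vec n -> R) : affine L -> affine M -> SOCr (fun x => L x <= M x).
Proof.
move=> HL HM; apply: SOCr_ext (SOCr_le0 (affineB HL HM)) => x; lra.
Qed.

Lemma SOCr_eq n (L M : vec n -> R) : affine L -> affine M -> SOCr (fun x => L x = M x).
Proof.
move=> HL HM; apply: SOCr_ext (SOCr_eq0 (affineB HL HM)) => x; lra.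
Qed.

Lemma SOCr_forall n M (P : 'I_M -> vec n -> Prop) :
  (forall j, SOCr (P j)) -> SOCr (fun x => forall j, P j x).
Proof.
elim: M P => [|M IH] P H.
  by apply: SOCr_ext (SOCr_true n) => x; split => // _ [].
apply: (SOCr_ext (P := fun x => (forall j : 'I_M, P (widen_ord (leqnSn M) j) x) /\ P ord_max x)).
  move=> x; split; last by move=> K; split => [j|]; apply: K.
  move=> [K1 K2] j; case: (unliftP ord_max j) => [j' ->|->] //.
  have -> : lift ord_max j' = widen_ord (leqnSn M) j'.
    by apply: val_inj; rewrite /= /bump leqNgt ltn_ord.
  exact: K1.
by apply: SOCr_and => //; apply: IH.
Qed.

Lemma SOCr_if (b : bool) n (P : vec n -> Prop) :
  SOCr P -> SOCr (fun v => if b then True else P v).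
Proof. by case: b => // _; exact: SOCr_true. Qed.

(** * Convex hulls of finite unions *)

Definition convex n (Q : vec n -> Prop) :=
  forall u v t, 0 <= t <= 1 -> Q u -> Q v -> Q (fun c => t * u c + (1 - t) * v c).

Lemma conv_sub n (S : vec n -> Prop) z : S z -> conv S z.
Proof.
move=> Sz; exists 1%N, (fun _ => 1), (fun _ => z).
split; first by move=> _; lra.
split; first by rewrite rsumS rsum_ord0; lra.
by split => // i; rewrite rsumS rsum_ord0; lra.
Qed.

Lemma conv_mono n (S S' : vec n -> Prop) z : (forall p, S p -> S' p) -> conv S z -> conv S' z.
Proof.
move=> H [k [l [p [L [S1 [P E]]]]]]; exists k, l, p.
by split; [|split; [|split]] => // j; apply: H.
Qed.

Lemma convex_conv n (S : vec n -> Prop) : convex (conv S).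
Proof.
move=> u v t Ht [k1 [l1 [p1 [L1 [S1 [P1 E1]]]]]] [k2 [l2 [p2 [L2 [S2 [P2 E2]]]]]].
exists (k1 + k2)%N, (gcat (fun j => t * l1 j) (fun j => (1 - t) * l2 j)), (gcat p1 p2).
split; first by move=> j; rewrite /gcat; case: (split j) => b; [have := L1 b | have := L2 b]; nra.
split.
  rewrite rsum_split (rsum_ext (G := fun j => t * l1 j)) => [|j]; last by rewrite gcatL.
  rewrite (rsum_ext (G := fun j => (1 - t) * l2 j)) => [|j]; last by rewrite gcatR.
  by rewrite !rsum_scal S1 S2; lra.
split; first by move=> j; rewrite /gcat; case: (split j) => b; [exact: P1 | exact: P2].
move=> i; rewrite rsum_split.
rewrite (rsum_ext (G := fun j => t * (l1 j * p1 j i))) => [|j]; last by rewrite !gcatL; lra.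
rewrite (rsum_ext (G := fun j => (1 - t) * (l2 j * p2 j i))) => [|j]; last by rewrite !gcatR; lra.
by rewrite !rsum_scal E1 E2.
Qed.

(* A piece P of R^n is handled through its homogenization: a cone K in R x R^n
   whose elements (l, w) with l > 0 are those with w / l in P, and which
   contains only (0, 0) at l = 0. [cone_sum Ks mu z] says that (mu, z) is a sum
   of one element of each cone of Ks; [cone_sum Ks 1] is then the convex hull
   of the union of the pieces (Balas' disjunctive formulation). *)
Definition cone n (K : R -> vec n -> Prop) :=
  K 0 (fun _ => 0) /\
  (forall l1 w1 l2 w2, K l1 w1 -> K l2 w2 -> K (l1 + l2) (fun c => w1 c + w2 c)) /\
  (forall c l w, 0 <= c -> K l w -> K (c * l) (fun i => c * w i)).

Fixpoint cone_sum n (Ks : seq (R -> vec n -> Prop)) (mu : R) (z : vec n) : Prop :=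
  match Ks with
  | [::] => mu = 0 /\ forall c, z c = 0
  | K :: Ks' => exists mu' z' l w,
      cone_sum Ks' mu' z' /\ K l w /\ mu = mu' + l /\ forall c, z c = z' c + w c
  end.

Section ConeSum.
Variables (n : nat) (Ks : seq (R -> vec n -> Prop)).

Lemma cone_sum_ext m m' z z' :
  m = m' -> (forall c, z c = z' c) -> cone_sum Ks m z -> cone_sum Ks m' z'.
Proof. by move=> -> E; have -> : z = z' by apply: functional_extensionality. Qed.

Hypothesis Ks_cone : forall K, List.In K Ks -> cone K.

Lemma cone_sum0 : cone_sum Ks 0 (fun _ => 0).
Proof.
elim: Ks Ks_cone => [|K Ks' IH] H /=; first by split.
exists 0, (fun _ => 0), 0, (fun _ => 0); split; first by apply: IH => K' ?; apply: H; right.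
by split; [have [] := H K (or_introl erefl) | split => *; lra].
Qed.

Lemma cone_sumD m1 z1 m2 z2 :
  cone_sum Ks m1 z1 -> cone_sum Ks m2 z2 -> cone_sum Ks (m1 + m2) (fun c => z1 c + z2 c).
Proof.
elim: Ks Ks_cone m1 z1 m2 z2 => [|K Ks' IH] H m1 z1 m2 z2 /=.
  by move=> [-> E1] [-> E2]; split => [|c]; [lra | rewrite E1 E2; lra].
move=> [m1' [z1' [l1 [w1 [P1 [K1 [E1 F1]]]]]]] [m2' [z2' [l2 [w2 [P2 [K2 [E2 F2]]]]]]].
exists (m1' + m2'), (fun c => z1' c + z2' c), (l1 + l2), (fun c => w1 c + w2 c).
split; first by apply: IH => // K' ?; apply: H; right.
split; first by have [_ [HD _]] := H K (or_introl erefl); apply: HD.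
by split => [|c]; [lra | rewrite F1 F2; lra].
Qed.

Lemma cone_sumZ c m z : 0 <= c -> cone_sum Ks m z -> cone_sum Ks (c * m) (fun i => c * z i).
Proof.
elim: Ks Ks_cone m z => [|K Ks' IH] H m z Hc /=.
  by move=> [-> E]; split => [|i]; [lra | rewrite E; lra].
move=> [m' [z' [l [w [P [K1 [E F]]]]]]].
exists (c * m'), (fun i => c * z' i), (c * l), (fun i => c * w i).
split; first by apply: IH => // K' ?; apply: H; right.
split; first by have [_ [_ HZ]] := H K (or_introl erefl); apply: HZ.
by split => [|i]; [rewrite E; lra | rewrite F; lra].
Qed.

Lemma cone_sum_convex z z1 z2 th : 0 <= th <= 1 ->
  (forall c, z c = th * z1 c + (1 - th) * z2 c) ->
  cone_sum Ks 1 z1 -> cone_sum Ks 1 z2 -> cone_sum Ks 1 z.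
Proof.
move=> Hth E /(cone_sumZ (proj1 Hth)) P1 /(@cone_sumZ (1 - th)) P2.
by apply: (cone_sum_ext _ _ (cone_sumD P1 (P2 _))) => [|c|]; rewrite ?E; lra.
Qed.


Lemma conv_cone_sum (S : vec n -> Prop) :
  (forall p, S p -> cone_sum Ks 1 p) -> forall z, conv S z -> cone_sum Ks 1 z.
Proof.
move=> HS z [k [l [p [L [S1 [P E]]]]]].
suff : cone_sum Ks (rsum l) (fun i => rsum (fun j => l j * p j i)).
  by apply: (cone_sum_ext S1) => c; rewrite E.
elim: k l p L P {S1 E} => [|k IH] l p L P.
  by apply: (cone_sum_ext _ _ cone_sum0) => [|c]; rewrite rsum_ord0.
apply: (cone_sum_ext (m := rsum (fun j : 'I_k => l (widen_ord (leqnSn k) j)) + l ord_max * 1)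
  (z := fun i => rsum (fun j : 'I_k => l (widen_ord (leqnSn k) j) * p (widen_ord (leqnSn k) j) i)
                 + l ord_max * p ord_max i)) => [|c|]; rewrite ?[in RHS]rsumS //; first lra.
by apply: cone_sumD; [apply: IH | apply: cone_sumZ; [|apply: HS]].
Qed.

End ConeSum.

Lemma cone_sum_member n (Ks : seq (R -> vec n -> Prop)) K z :
  (forall K, List.In K Ks -> cone K) -> List.In K Ks -> K 1 z -> cone_sum Ks 1 z.
Proof.
elim: Ks => [|K0 Ks' IH] H //= [<-|HK] Kz.
  exists 0, (fun _ => 0), 1, z; split; first by apply: cone_sum0 => K' ?; apply: H; right.
  by split => //; split => [|c]; lra.
exists 1, z, 0, (fun _ => 0); split; first by apply: IH => // K' ?; apply: H; right.
split; first by have [] := H K0 (or_introl erefl).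
by split => [|c]; lra.
Qed.

Lemma cone_sum_persp n (Ks : seq (R -> vec n -> Prop)) (Q : vec n -> Prop) : convex Q ->
  (forall K, List.In K Ks -> forall l w, K l w ->
     0 <= l /\ (l = 0 -> forall c, w c = 0) /\ (0 < l -> Q (fun c => w c / l))) ->
  forall m z, cone_sum Ks m z ->
     0 <= m /\ (m = 0 -> forall c, z c = 0) /\ (0 < m -> Q (fun c => z c / m)).
Proof.
move=> HQ; elim: Ks => [|K Ks IH] H m z /=.
  by move=> [-> E]; split; [lra | split => // ?; lra].
move=> [m' [z' [l [w [P [K1 [E F]]]]]]].
have [Hm' [Z' Q']] := IH (fun K' HK' => H K' (or_intror HK')) _ _ P.
have [Hl [Zl Ql]] := H K (or_introl erefl) _ _ K1.
split; first lra.
split; first by move=> m0 c; rewrite F Z' ?Zl; lra.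
move=> mpos; have [m'0|m'pos] : m' = 0 \/ 0 < m' by lra.
  have -> : (fun c => z c / m) = (fun c => w c / l).
    by apply: functional_extensionality => c; rewrite F Z' // E m'0; field; lra.
  by apply: Ql; lra.
have [l0|lpos] : l = 0 \/ 0 < l by lra.
  have -> : (fun c => z c / m) = (fun c => z' c / m').
    by apply: functional_extensionality => c; rewrite F Zl // E l0; field; lra.
  exact: Q'.
have -> : (fun c => z c / m) = (fun c => (m' / m) * (z' c / m') + (1 - m' / m) * (w c / l)).
  by apply: functional_extensionality => c; rewrite F E; field; lra.
have tm : m' / m * m = m' by field; lra.
by apply: HQ; [split; nra | exact: Q' | exact: Ql].
Qed.

Definition hd1 n (v : vec (1 + n)) : R := v (lshift n ord0).

Lemma SOCr_cone_sum n (Ks : seq (R -> vec n -> Prop)) :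
  (forall K, List.In K Ks -> SOCr (fun v : vec (1 + n) => K (hd1 v) (vr v))) ->
  SOCr (fun v : vec (1 + n) => cone_sum Ks (hd1 v) (vr v)).
Proof.
elim: Ks => [|K Ks IH] H /=.
  apply: SOCr_and; first by apply: SOCr_eq; [exact: affine_coord | exact: affine_const].
  by apply: SOCr_forall => c; apply: SOCr_eq; [exact: affine_coord | exact: affine_const].
have IH' := IH (fun K' HK' => H K' (or_intror HK')).
pose G1 := fun u : vec ((1 + n) + ((1 + n) + (1 + n))) => vl (vr u).
pose G2 := fun u : vec ((1 + n) + ((1 + n) + (1 + n))) => vr (vr u).
have S1 := SOCr_comp (G := G1) (fun j => affine_coord (rshift (1 + n) (lshift (1 + n) j))) IH'.
have S2 := SOCr_comp (G := G2) (fun j => affine_coord (rshift (1 + n) (rshift (1 + n) j)))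
  (H K (or_introl erefl)).
have S3 : SOCr (fun u : vec ((1 + n) + ((1 + n) + (1 + n))) =>
    hd1 (vl u) = hd1 (G1 u) + hd1 (G2 u)).
  by apply: SOCr_eq; [|apply: affineD]; exact: affine_coord.
have S4 : SOCr (fun u : vec ((1 + n) + ((1 + n) + (1 + n))) =>
    forall c, vr (vl u) c = vr (G1 u) c + vr (G2 u) c).
  by apply: SOCr_forall => c; apply: SOCr_eq; [|apply: affineD]; exact: affine_coord.
apply: SOCr_ext (SOCr_exists (SOCr_and S1 (SOCr_and S2 (SOCr_and S3 S4)))) => v; split.
  move=> [y]; rewrite /G1 /G2 !vl_vcat !vr_vcat => -[P1 [P2 [P3 P4]]].
  by exists (hd1 (vl y)), (vr (vl y)), (hd1 (vr y)), (vr (vr y)).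
move=> [m' [z' [l [w [P1 [P2 [P3 P4]]]]]]].
exists (vcat (vcat (fun _ => m') z') (vcat (fun _ => l) w)).
rewrite /G1 /G2 !vl_vcat !vr_vcat /hd1 !gcatL ?vl_vcat ?vr_vcat !gcatL.
by split; [|split; [|split]].
Qed.

(** * The convex hull of a hyperbola arc *)

Lemma Rle_divl a b c : 0 < c -> a / c <= b <-> a <= b * c.
Proof.
move=> c0; split=> H.
  by have := Rmult_le_compat_r c _ _ (Rlt_le _ _ c0) H; rewrite /Rdiv Rmult_assoc Rinv_l; lra.
by apply: (Rmult_le_reg_r c) => //; rewrite /Rdiv Rmult_assoc Rinv_l; lra.
Qed.

Lemma Rle_divr a b c : 0 < c -> b <= a / c <-> b * c <= a.
Proof.
move=> c0; split=> H.
  by have := Rmult_le_compat_r c _ _ (Rlt_le _ _ c0) H; rewrite /Rdiv Rmult_assoc Rinv_l; lra.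
by apply: (Rmult_le_reg_r c) => //; rewrite /Rdiv Rmult_assoc Rinv_l; lra.
Qed.

Lemma segment_param p x q : p <= x <= q -> exists th, 0 <= th <= 1 /\ x = th * p + (1 - th) * q.
Proof.
move=> [H1 H2]; case: (Req_dec p q) => [E|E].
  by exists 1; split; [lra | rewrite E in H1 *; lra].
exists ((q - x) / (q - p)); split; last by field; lra.
by split; [apply: Rmult_le_pos; [lra | apply/Rlt_le/Rinv_0_lt_compat; lra]
          | apply/Rle_divl; lra].
Qed.

(* The homogenization of the convex hull of the arc s t = K, A <= s <= B:
   the rotated cone K <= s t cut by the chord through (A, K/A) and (B, K/B). *)
Definition hyp_arc (K A B l s t : R) :=
  0 <= s /\ 0 <= t /\ l * A <= s /\ s <= l * B /\
  A * B * t + K * s <= K * (A + B) * l /\ K * (l * l) <= s * t.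

Lemma rotated_coneD k l1 l2 p1 q1 p2 q2 :
  0 <= k -> 0 <= l1 -> 0 <= l2 -> 0 <= p1 -> 0 <= q1 -> 0 <= p2 -> 0 <= q2 ->
  k * (l1 * l1) <= p1 * q1 -> k * (l2 * l2) <= p2 * q2 ->
  k * ((l1 + l2) * (l1 + l2)) <= (p1 + p2) * (q1 + q2).
Proof.
move=> k0 l10 l20 p10 q10 p20 q20 E1 E2.
have prod : (k * (l1 * l1)) * (k * (l2 * l2)) <= (p1 * q1) * (p2 * q2).
  by apply: Rmult_le_compat; nra.
have cross : 2 * (k * l1 * l2) <= p1 * q2 + p2 * q1.
  have := Rle_0_sqr (p1 * q2 - p2 * q1); rewrite /Rsqr => sq.
  have klr : 0 <= k * l1 * l2 by apply: Rmult_le_pos => //; apply: Rmult_le_pos.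
  by apply: Rsqr_incr_0; rewrite /Rsqr; [lra | lra | nra].
lra.
Qed.

Lemma hyp_arcD K A B l1 s1 t1 l2 s2 t2 : 0 <= K -> 0 <= l1 -> 0 <= l2 ->
  hyp_arc K A B l1 s1 t1 -> hyp_arc K A B l2 s2 t2 ->
  hyp_arc K A B (l1 + l2) (s1 + s2) (t1 + t2).
Proof.
move=> K0 l10 l20 [S1 [T1 [A1 [B1 [C1 P1]]]]] [S2 [T2 [A2 [B2 [C2 P2]]]]].
do 5 (split; first lra).
exact: rotated_coneD.
Qed.

Lemma hyp_arcZ K A B c l s t : 0 <= c ->
  hyp_arc K A B l s t -> hyp_arc K A B (c * l) (c * s) (c * t).
Proof.
move=> c0 [S [T [A1 [B1 [C1 P1]]]]].
do 5 (split; first nra).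
have -> : c * s * (c * t) = (c * c) * (s * t) by ring.
have -> : K * (c * l * (c * l)) = (c * c) * (K * (l * l)) by ring.
by apply: Rmult_le_compat_l => //; nra.
Qed.

Lemma hyp_arc_hull K A B s t : 0 < A -> 0 < K ->
  hyp_arc K A B 1 s t -> exists mu th, 0 <= mu <= 1 /\ 0 <= th <= 1 /\
    s = mu * A + (1 - mu) * B /\ t = th * (K / s) + (1 - th) * (mu * (K / A) + (1 - mu) * (K / B)).
Proof.
move=> A0 K0 [_ [_ [sA [sB [chord st]]]]].
rewrite !Rmult_1_l Rmult_1_r in sA sB chord st.
have [mu [Hmu Emu]] := segment_param (conj sA sB).
pose tc := mu * (K / A) + (1 - mu) * (K / B).
have Etc : tc * (A * B) = K * (A + B - s) by rewrite /tc Emu; field; lra.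
have t_tc : t <= tc by apply: (Rmult_le_reg_r (A * B)); nra.
have Ks_t : K / s <= t by apply/Rle_divl; lra.
have [th [Hth Eth]] := segment_param (conj Ks_t t_tc).
by exists mu, th.
Qed.

Definition vec2 (p q : R) : vec 2 := fun j => if val j == 0%N then p else q.

Lemma norm2_vec2 p q : norm2 (vec2 p q) = sqrt (p * p + q * q).
Proof. by rewrite /norm2 rsumS rsumS rsum_ord0 /vec2 /=; congr sqrt; lra. Qed.

Lemma rotated_cone_soc K l s t : 0 <= s -> 0 <= t -> 0 <= K ->
  (norm2 (vec2 (2 * sqrt K * l) (s - t)) <= s + t <-> K * (l * l) <= s * t).
Proof.
move=> s0 t0 K0; rewrite norm2_vec2.
have -> : 2 * sqrt K * l * (2 * sqrt K * l) = 4 * K * (l * l) by have := sqrt_sqrt K K0; nra.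
have Q0 : 0 <= 4 * K * (l * l) + (s - t) * (s - t).
  by have := Rle_0_sqr l; have := Rle_0_sqr (s - t); rewrite /Rsqr; nra.
rewrite -(sqrt_square (s + t)); last lra.
split=> H; last by apply: sqrt_le_1_alt; nra.
have := sqrt_le_0 _ _ Q0 (Rle_0_sqr _) H; rewrite /Rsqr; nra.
Qed.

Section BilinearBox.
Variables (N : nat) (a xl xu yl yu : vec N).
Hypothesis a_neq0 : forall i, a i <> 0.

Definition lo : vec (N + N) := vcat xl yl.
Definition hi : vec (N + N) := vcat xu yu.
Definition bilin (z : vec (N + N)) := rsum (fun i => a i * z (lshift N i) * z (rshift N i)).
Definition Sbox (z : vec (N + N)) := bilin z = 0 /\ forall c, lo c <= z c <= hi c.

Lemma SboxE z : Sbox z <-> S_a a xl xu yl yu z.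
Proof.
rewrite /Sbox /S_a /bilin /xpart /ypart; split.
  move=> [Q B]; split => //; split => i.
    by have := B (lshift N i); rewrite /lo /hi !gcatL.
  by have := B (rshift N i); rewrite /lo /hi !gcatR.
move=> [Q [B1 B2]]; split => // c; rewrite /lo /hi.
by case: (split_ordP c) => j ->; rewrite ?gcatL ?gcatR.
Qed.

Lemma box_persp0 l w : (forall c, l * lo c <= w c <= l * hi c) -> l = 0 -> forall c, w c = 0.
Proof. by move=> B l0 c; have := B c; rewrite l0; lra. Qed.

Lemma box_persp l w : (forall c, l * lo c <= w c <= l * hi c) -> 0 < l ->
  forall c, lo c <= w c / l <= hi c.
Proof.
move=> B lp c; have [H1 H2] := B c.
by split; apply: (Rmult_le_reg_r l) => //; field_simplify; lra.
Qed.

Lemma affine_vr (c : 'I_(N + N)) : affine (fun v : vec (1 + (N + N)) => vr v c).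
Proof. exact: (affine_coord (rshift 1 c)). Qed.

Lemma affine_hd1Z c : affine (fun v : vec (1 + (N + N)) => hd1 v * c).
Proof. by apply: affineZr; apply: affine_coord. Qed.

Lemma affine_vrZ c (i : 'I_(N + N)) : affine (fun v : vec (1 + (N + N)) => c * vr v i).
Proof. by apply: affineZ; apply: affine_vr. Qed.

Lemma SOCr_box :
  SOCr (fun v : vec (1 + (N + N)) => forall c, hd1 v * lo c <= vr v c <= hd1 v * hi c).
Proof.
by apply: SOCr_forall => c; apply: SOCr_and; apply: SOCr_le;
  first [exact: affine_hd1Z | exact: affine_vr].
Qed.

(** * Polyhedral pieces *)

(* In a mode, (md k).1.1 and (md k).1.2 select the value of x_k and y_k among
   {lower bound, upper bound, 0}, and (md k).2 says whether x_k (0), y_k (1)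
   or neither (2) is left free. With the other entry fixed, the term
   a_k x_k y_k is linear. *)
Definition pick3 (l u : R) (c : 'I_3) :=
  if val c == 0%N then l else if val c == 1%N then u else 0.
Definition mode := {ffun 'I_N -> 'I_3 * 'I_3 * 'I_3}.
Definition xfree (md : mode) k := val (md k).2 == 0%N.
Definition yfree (md : mode) k := val (md k).2 == 1%N.
Definition xval (md : mode) k := pick3 (xl k) (xu k) (md k).1.1.
Definition yval (md : mode) k := pick3 (yl k) (yu k) (md k).1.2.
Definition lin_form md (w : vec (N + N)) :=
  rsum (fun k => a k * (if xfree md k then yval md k * w (lshift N k)
                        else xval md k * w (rshift N k))).

Definition lin_piece (md : mode) (l : R) (w : vec (N + N)) :=
  (forall c, l * lo c <= w c <= l * hi c) /\ 0 <= l /\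
  (forall k, if xfree md k then True else w (lshift N k) = l * xval md k) /\
  (forall k, if yfree md k then True else w (rshift N k) = l * yval md k) /\
  lin_form md w = 0.

Lemma lin_formD md w1 w2 :
  lin_form md (fun c => w1 c + w2 c) = lin_form md w1 + lin_form md w2.
Proof. by rewrite /lin_form -rsum_add; apply: rsum_ext => k; case: (xfree md k); lra. Qed.

Lemma lin_formZ md c w : lin_form md (fun i => c * w i) = c * lin_form md w.
Proof. by rewrite /lin_form -rsum_scal; apply: rsum_ext => k; case: (xfree md k); lra. Qed.

Lemma cone_lin_piece md : cone (lin_piece md).
Proof.
split; [|split].
- split; first by move=> c; lra.
  split; first lra.
  split; first by move=> k; case: (xfree md k) => //; lra.
  split; first by move=> k; case: (yfree md k) => //; lra.
  by rewrite /lin_form -[RHS](rsum0 N); apply: rsum_ext => k; case: (xfree md k); lra.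
- move=> l1 w1 l2 w2 [B1 [L1 [X1 [Y1 H1]]]] [B2 [L2 [X2 [Y2 H2]]]].
  split; first by move=> c; have := B1 c; have := B2 c; lra.
  split; first lra.
  split; first by move=> k; have := X1 k; have := X2 k; case: (xfree md k) => //; lra.
  split; first by move=> k; have := Y1 k; have := Y2 k; case: (yfree md k) => //; lra.
  by rewrite lin_formD H1 H2; lra.
- move=> c l w Hc [B1 [L1 [X1 [Y1 H1]]]].
  split; first by move=> i; have := B1 i; nra.
  split; first nra.
  split; first by move=> k; have := X1 k; case: (xfree md k) => // ->; lra.
  split; first by move=> k; have := Y1 k; case: (yfree md k) => // ->; lra.
  by rewrite lin_formZ H1; lra.
Qed.

Lemma lin_piece_persp md l w : lin_piece md l w ->
  0 <= l /\ (l = 0 -> forall c, w c = 0) /\ (0 < l -> conv Sbox (fun c => w c / l)).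
Proof.
move=> [B [L [X [Y H]]]]; split => //; split; first exact: box_persp0.
move=> lp; apply: conv_sub; split; last exact: box_persp.
rewrite /bilin -(Rmult_0_r (/ l)) -H /lin_form -rsum_scal; apply: rsum_ext => k.
have := X k; have := Y k; case Ex: (xfree md k).
  have -> : yfree md k = false by move: Ex; rewrite /xfree /yfree => /eqP ->.
  by move=> -> _; field; lra.
by move=> _ ->; field; lra.
Qed.

Lemma SOCr_lin_piece md : SOCr (fun v : vec (1 + (N + N)) => lin_piece md (hd1 v) (vr v)).
Proof.
apply: SOCr_and; first exact: SOCr_box.
apply: SOCr_and; first by apply: SOCr_le; [exact: affine_const | exact: affine_coord].
do 2 (apply: SOCr_and; first by apply: SOCr_forall => k; apply: SOCr_if;
  apply: SOCr_eq; [exact: affine_vr | exact: affine_hd1Z]).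
apply: SOCr_eq; last exact: affine_const.
by apply: affine_sum => k; apply: affineZ; case: (xfree md k); exact: affine_vrZ.
Qed.

(** * Hyperbolic pieces *)

(* If all pairs but the i-th sit
   at the corner bd, the equation reads x_i y_i = - corner_rest i bd / a i;
   the signs es, et turn it into s t = hyp_k with s = +-x_i and t = +-y_i,
   and the box restricts s to [hyp_lo, hyp_hi]. *)
Definition corner := {ffun 'I_N -> bool * bool}.
Definition sgn (b : bool) : R := if b then 1 else -1.
Definition xcorner (bd : corner) k := if (bd k).1 then xu k else xl k.
Definition ycorner (bd : corner) k := if (bd k).2 then yu k else yl k.
Definition corner_rest i (bd : corner) :=
  rsum (fun k => if k == i then 0 else a k * xcorner bd k * ycorner bd k).
Definition hyp_k i es et bd := sgn es * sgn et * (- corner_rest i bd / a i).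
Definition slo i (es : bool) := if es then xl i else - xu i.
Definition shi i (es : bool) := if es then xu i else - xl i.
Definition tlo i (et : bool) := if et then yl i else - yu i.
Definition thi i (et : bool) := if et then yu i else - yl i.
Definition hyp_lo i es et bd := Rmax (slo i es) (hyp_k i es et bd / thi i et).
(* The bound t >= tlo only cuts the arc when tlo > 0. *)
Definition hyp_hi i es et bd :=
  if Rlt_dec 0 (tlo i et) then Rmin (shi i es) (hyp_k i es et bd / tlo i et) else shi i es.
Definition hyp_s (es : bool) i (w : vec (N + N)) := sgn es * w (lshift N i).
Definition hyp_t (et : bool) i (w : vec (N + N)) := sgn et * w (rshift N i).

Definition hyp_piece i es et bd (l : R) (w : vec (N + N)) :=
  if Rlt_dec 0 (hyp_k i es et bd) then
    (forall c, l * lo c <= w c <= l * hi c) /\ 0 <= l /\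
    (forall k, if k == i then True else w (lshift N k) = l * xcorner bd k) /\
    (forall k, if k == i then True else w (rshift N k) = l * ycorner bd k) /\
    hyp_arc (hyp_k i es et bd) (hyp_lo i es et bd) (hyp_hi i es et bd)
      l (hyp_s es i w) (hyp_t et i w)
  else l = 0 /\ forall c, w c = 0.

Lemma cone_hyp_piece i es et bd : cone (hyp_piece i es et bd).
Proof.
rewrite /cone /hyp_piece /hyp_s /hyp_t; case: Rlt_dec => Kp; last first.
  split; first by split.
  split; first by move=> l1 w1 l2 w2 [-> E1] [-> E2]; split => [|c]; [lra | rewrite E1 E2; lra].
  by move=> c l w _ [-> E]; split => [|j]; [lra | rewrite E; lra].
split; [|split].
- split; first by move=> c; lra.
  split; first lra.
  split; first by move=> k; case: (k == i) => //; lra.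
  split; first by move=> k; case: (k == i) => //; lra.
  by rewrite /hyp_arc; do 5 (split; first lra); lra.
- move=> l1 w1 l2 w2 [B1 [L1 [X1 [Y1 H1]]]] [B2 [L2 [X2 [Y2 H2]]]].
  split; first by move=> c; have := B1 c; have := B2 c; lra.
  split; first lra.
  split; first by move=> k; have := X1 k; have := X2 k; case: (k == i) => //; lra.
  split; first by move=> k; have := Y1 k; have := Y2 k; case: (k == i) => //; lra.
  by rewrite !Rmult_plus_distr_l; apply: hyp_arcD => //; lra.
- move=> c l w Hc [B1 [L1 [X1 [Y1 H1]]]].
  split; first by move=> j; have := B1 j; nra.
  split; first nra.
  split; first by move=> k; have := X1 k; case: (k == i) => // ->; lra.
  split; first by move=> k; have := Y1 k; case: (k == i) => // ->; lra.
  have -> : sgn es * (c * w (lshift N i)) = c * (sgn es * w (lshift N i)) by ring.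
  have -> : sgn et * (c * w (rshift N i)) = c * (sgn et * w (rshift N i)) by ring.
  exact: hyp_arcZ.
Qed.

Lemma SOCr_hyp_piece i es et bd :
  SOCr (fun v : vec (1 + (N + N)) => hyp_piece i es et bd (hd1 v) (vr v)).
Proof.
rewrite /hyp_piece; case: Rlt_dec => Kp; last first.
  apply: SOCr_and; first by apply: SOCr_eq; [exact: affine_coord | exact: affine_const].
  by apply: SOCr_forall => c; apply: SOCr_eq; [exact: affine_vr | exact: affine_const].
set K := hyp_k i es et bd; set A := hyp_lo i es et bd; set B := hyp_hi i es et bd.
apply: SOCr_and; first exact: SOCr_box.
apply: SOCr_and; first by apply: SOCr_le; [exact: affine_const | exact: affine_coord].
do 2 (apply: SOCr_and; first by apply: SOCr_forall => k; apply: SOCr_if;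
  apply: SOCr_eq; [exact: affine_vr | exact: affine_hd1Z]).
have Hl : affine (fun v : vec (1 + (N + N)) => hd1 v) by exact: affine_coord.
have Hs : affine (fun v : vec (1 + (N + N)) => hyp_s es i (vr v)) by exact: affine_vrZ.
have Ht : affine (fun v : vec (1 + (N + N)) => hyp_t et i (vr v)) by exact: affine_vrZ.
apply: (SOCr_ext (P := fun v => 0 <= hyp_s es i (vr v) /\ 0 <= hyp_t et i (vr v) /\
   hd1 v * A <= hyp_s es i (vr v) /\ hyp_s es i (vr v) <= hd1 v * B /\
   A * B * hyp_t et i (vr v) + K * hyp_s es i (vr v) <= K * (A + B) * hd1 v /\
   norm2 (vec2 (2 * sqrt K * hd1 v) (hyp_s es i (vr v) - hyp_t et i (vr v)))
     <= hyp_s es i (vr v) + hyp_t et i (vr v))).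
  move=> v; rewrite /hyp_arc.
  by split=> -[P1 [P2 [P3 [P4 [P5 P6]]]]]; do 5 (split => //);
    apply/(rotated_cone_soc (hd1 v) P1 P2 (Rlt_le _ _ Kp)).
do 2 (apply: SOCr_and; first by apply: SOCr_le; [exact: affine_const|]).
apply: SOCr_and; first by apply: SOCr_le; [exact: affine_hd1Z | exact: Hs].
apply: SOCr_and; first by apply: SOCr_le; [exact: Hs | exact: affine_hd1Z].
apply: SOCr_and; first by apply: SOCr_le; [apply: affineD; apply: affineZ | apply: affineZ].
apply: (SOCr_norm2_le (L := fun j v => vec2 (2 * sqrt K * hd1 v)
  (hyp_s es i (vr v) - hyp_t et i (vr v)) j)); last exact: affineD.
by move=> j; rewrite /vec2; case: (val j == 0%N); [apply: affineZ | apply: affineB].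
Qed.

Lemma sgn_sqr b : sgn b * sgn b = 1.
Proof. by case: b => /=; lra. Qed.

Lemma s_range es i v : xl i <= v <= xu i <-> slo i es <= sgn es * v <= shi i es.
Proof. by rewrite /slo /shi /sgn; case: es; lra. Qed.

Lemma t_range et i v : yl i <= v <= yu i <-> tlo i et <= sgn et * v <= thi i et.
Proof. by rewrite /tlo /thi /sgn; case: et; lra. Qed.

Definition upd i (z : vec (N + N)) (u v : R) : vec (N + N) :=
  fun c => if c == lshift N i then u else if c == rshift N i then v else z c.

Lemma upd_l i z u v k : upd i z u v (lshift N k) = if k == i then u else z (lshift N k).
Proof. by rewrite /upd eq_lshift eq_lrshift; case: (k == i). Qed.

Lemma upd_r i z u v k : upd i z u v (rshift N k) = if k == i then v else z (rshift N k).
Proof. by rewrite /upd eq_rlshift eq_rshift. Qed.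

Lemma Sbox_hyperbola i es et bd z sig :
  0 < hyp_k i es et bd -> (forall c, lo c <= z c <= hi c) ->
  (forall k, k != i -> z (lshift N k) = xcorner bd k /\ z (rshift N k) = ycorner bd k) ->
  0 < thi i et -> hyp_lo i es et bd <= sig <= hyp_hi i es et bd ->
  Sbox (upd i z (sgn es * sig) (sgn et * (hyp_k i es et bd / sig))).
Proof.
move=> Kp B O T2 [S1 S2].
set K := hyp_k i es et bd in Kp S1 S2 *.
have A1 : K / thi i et <= hyp_lo i es et bd by apply: Rmax_r.
have A2 : slo i es <= hyp_lo i es et bd by apply: Rmax_l.
have Kt : 0 < K / thi i et by apply: Rdiv_lt_0_compat.
have sig0 : 0 < sig by lra.
have B2 : hyp_hi i es et bd <= shi i es.
  by rewrite /hyp_hi; case: Rlt_dec => _ /=; [apply: Rmin_l | lra].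
split.
  rewrite /bilin (rsum_D1 i) upd_l upd_r !eqxx.
  rewrite (rsum_ext (G := fun k => if k == i then 0 else a k * xcorner bd k * ycorner bd k)).
    rewrite -/(corner_rest i bd) /K /hyp_k.
    have -> : a i * (sgn es * sig) * (sgn et * (sgn es * sgn et * (- corner_rest i bd / a i) / sig))
      = sgn es * sgn es * (sgn et * sgn et) * - corner_rest i bd.
      by field; split; [exact: a_neq0 | lra].
    by rewrite !sgn_sqr; ring.
  move=> k; rewrite upd_l upd_r; case: eqP => [//|/eqP Hk].
  by have [-> ->] := O k Hk.
move=> c; rewrite /lo /hi; case: (split_ordP c) => j ->; rewrite ?gcatL ?gcatR.
  rewrite upd_l; case: eqP => [->|_]; last by have := B (lshift N j); rewrite /lo /hi !gcatL.
  by apply/(s_range es); rewrite -Rmult_assoc sgn_sqr; lra.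
rewrite upd_r; case: eqP => [->|_]; last by have := B (rshift N j); rewrite /lo /hi !gcatR.
apply/(t_range et); rewrite -Rmult_assoc sgn_sqr Rmult_1_l; split.
  move: S2; rewrite /hyp_hi; case: Rlt_dec => T1 /= S2.
    have /(Rle_divr _ _ T1) : sig <= K / tlo i et by apply: Rle_trans S2 (Rmin_r _ _).
    by move=> H; apply/Rle_divr; lra.
  by have := Rdiv_lt_0_compat _ _ Kp sig0; lra.
have := Rle_trans _ _ _ A1 S1 => /(Rle_divl _ _ T2) H.
by apply/Rle_divl; lra.
Qed.

Lemma hyp_piece_persp i es et bd l w : hyp_piece i es et bd l w ->
  0 <= l /\ (l = 0 -> forall c, w c = 0) /\ (0 < l -> conv Sbox (fun c => w c / l)).
Proof.
rewrite /hyp_piece; case: Rlt_dec => Kp; last by move=> [-> E]; split; [lra | split => // H; lra].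
move=> [B [L [X [Y H]]]]; split => //; split; first exact: box_persp0.
move=> lp; set K := hyp_k i es et bd in Kp H *.
set A := hyp_lo i es et bd in H *; set Bt := hyp_hi i es et bd in H *.
pose z := fun c => w c / l.
have Bz := box_persp B lp.
have Oz k : k != i -> z (lshift N k) = xcorner bd k /\ z (rshift N k) = ycorner bd k.
  by move=> /negbTE Hk; have := X k; have := Y k; rewrite Hk /z => -> ->; split; field; lra.
pose s := hyp_s es i z; pose t := hyp_t et i z.
have arc : hyp_arc K A Bt 1 s t.
  have Es : / l * hyp_s es i w = s by rewrite /s /hyp_s /z; field; lra.
  have Et : / l * hyp_t et i w = t by rewrite /t /hyp_t /z; field; lra.
  have := hyp_arcZ (Rlt_le _ _ (Rinv_0_lt_compat _ lp)) H.
  by rewrite Rinv_l ?Es ?Et //; lra.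
have [s0 [t0 [sA [sB [_ st]]]]] := arc.
have tp : 0 < t by nra.
have T2 : 0 < thi i et.
  have := Bz (rshift N i); rewrite /lo /hi !gcatR => /(t_range et) [_].
  by rewrite /t /hyp_t /z in tp; lra.
have A0 : 0 < A.
  have : K / thi i et <= A by apply: Rmax_r.
  by have := Rdiv_lt_0_compat _ _ Kp T2; lra.
have [mu [th [Hmu [Hth [Es Et]]]]] := hyp_arc_hull A0 Kp arc.
have zx : z (lshift N i) = sgn es * s by rewrite /s /hyp_s -Rmult_assoc sgn_sqr; lra.
have zy : z (rshift N i) = sgn et * t by rewrite /t /hyp_t -Rmult_assoc sgn_sqr; lra.
have point sig : A <= sig <= Bt -> conv Sbox (upd i z (sgn es * sig) (sgn et * (K / sig))).
  by move=> Hsig; apply: conv_sub; apply: Sbox_hyperbola.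
have -> : (fun c => w c / l) = (fun c => th * upd i z (sgn es * s) (sgn et * (K / s)) c +
   (1 - th) * (mu * upd i z (sgn es * A) (sgn et * (K / A)) c
               + (1 - mu) * upd i z (sgn es * Bt) (sgn et * (K / Bt)) c)).
  apply: functional_extensionality => c; rewrite /upd.
  case: eqP => [->|_]; first by rewrite -/(z _) zx Es; ring.
  case: eqP => [->|_]; first by rewrite -/(z _) zy Et; ring.
  by rewrite -/(z c); ring.
apply: convex_conv Hth (point _ _) (convex_conv Hmu (point _ _) (point _ _)); lra.
Qed.

(** * Reduction to the pieces *)

Definition pbool (P : Prop) : bool := if excluded_middle_informative P then true else false.

Lemma pboolP (P : Prop) : reflect P (pbool P).
Proof. by rewrite /pbool; case: excluded_middle_informative => H; constructor. Qed.

Definition free_at (z : vec (N + N)) c := pbool (lo c < z c < hi c).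
Definition nfree (z : vec (N + N)) := #|[set c | free_at z c]|.

(* Time at which x + t d leaves [l, h]; the junk value for d = 0 is not used. *)
Definition exit_time (l h x d : R) := if Rlt_dec 0 d then (h - x) / d else (l - x) / d.

Lemma exit_timeP l h x d : l < x < h -> d <> 0 ->
  0 < exit_time l h x d /\ (x + exit_time l h x d * d = l \/ x + exit_time l h x d * d = h) /\
  forall t, 0 <= t <= exit_time l h x d -> l <= x + t * d <= h.
Proof.
move=> [H1 H2] Hd; rewrite /exit_time; case: Rlt_dec => Hp /=.
  split; first by apply: Rdiv_lt_0_compat; lra.
  split; first by right; field; lra.
  by move=> t [T1 /(Rle_divr _ _ Hp) T2]; nra.
have Hn : d < 0 by lra.
have -> : (l - x) / d = (x - l) / - d by field; lra.
split; first by apply: Rdiv_lt_0_compat; lra.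
split; first by left; field; lra.
by move=> t [T1 /(Rle_divr _ _ (Ropp_0_gt_lt_contravar _ Hn)) T2]; nra.
Qed.

Definition shift (z d : vec (N + N)) (t : R) : vec (N + N) := fun c => z c + t * d c.
Definition exit_at (z d : vec (N + N)) c := exit_time (lo c) (hi c) (z c) (d c).

Lemma exit_at_min z d c1 c2 h : (forall c, lo c <= z c <= hi c) ->
  free_at z c1 -> free_at z c2 -> (forall c, c != c1 -> c != c2 -> d c = 0) ->
  (h = c1 \/ h = c2) -> d h <> 0 ->
  (forall c, (c = c1 \/ c = c2) -> d c <> 0 -> exit_at z d h <= exit_at z d c) ->
  0 < exit_at z d h /\ (forall c, lo c <= shift z d (exit_at z d h) c <= hi c) /\
  (nfree (shift z d (exit_at z d h)) < nfree z)%N.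
Proof.
move=> B F1 F2 Sd Hh dh Hmin.
have inC c : d c <> 0 -> c = c1 \/ c = c2.
  case: (eqVneq c c1) => [->|n1]; first by left.
  by case: (eqVneq c c2) => [->|n2]; [right | have := Sd c n1 n2].
have freeC c : d c <> 0 -> lo c < z c < hi c by move/inC => [->|->]; apply/pboolP.
have [R1 [R2 _]] := exit_timeP (freeC h dh) dh.
split => //; split.
  move=> c; case: (Req_dec (d c) 0) => [dc|dc]; first by have := B c; rewrite /shift dc; lra.
  have [_ [_ R3]] := exit_timeP (freeC c dc) dc.
  by rewrite /shift; apply: R3; split; [rewrite /exit_at; lra | exact: Hmin (inC c dc) dc].
apply: proper_card; apply/properP; split.
  apply/subsetP => c; rewrite !inE => /pboolP Hc; apply/pboolP.
  case: (Req_dec (d c) 0) => [dc|dc]; last exact: freeC.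
  by rewrite /shift dc Rmult_0_r Rplus_0_r in Hc.
exists h; first by rewrite inE; apply/pboolP; apply: freeC.
by rewrite inE; apply/negP => /pboolP; rewrite /shift /exit_at in R2 *; lra.
Qed.

Lemma exit_step z d c1 c2 : (forall c, lo c <= z c <= hi c) ->
  free_at z c1 -> free_at z c2 -> (forall c, c != c1 -> c != c2 -> d c = 0) ->
  (d c1 <> 0 \/ d c2 <> 0) ->
  exists t, 0 < t /\ (forall c, lo c <= shift z d t c <= hi c) /\ (nfree (shift z d t) < nfree z)%N.
Proof.
move=> B F1 F2 Sd Hd.
have step h : (h = c1 \/ h = c2) -> d h <> 0 ->
    (forall c, (c = c1 \/ c = c2) -> d c <> 0 -> exit_at z d h <= exit_at z d c) ->
    exists t, 0 < t /\ (forall c, lo c <= shift z d t c <= hi c) /\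
      (nfree (shift z d t) < nfree z)%N.
  by move=> *; exists (exit_at z d h); apply: (exit_at_min (c1 := c1) (c2 := c2)).
case: (Req_dec (d c1) 0) => [d1|d1].
  by apply: (step c2); [right | case: Hd | move=> c [->|->]; lra].
case: (Req_dec (d c2) 0) => [d2|d2].
  by apply: (step c1); [left | | move=> c [->|->]; lra].
case: (Rle_lt_dec (exit_at z d c1) (exit_at z d c2)) => Hr.
  by apply: (step c1); [left | | move=> c [->|->]; lra].
by apply: (step c2); [right | | move=> c [->|->]; lra].
Qed.

Definition Sbox_splits z := exists z1 z2 th, 0 <= th <= 1 /\
  (forall c, z c = th * z1 c + (1 - th) * z2 c) /\
  Sbox z1 /\ Sbox z2 /\ (nfree z1 < nfree z)%N /\ (nfree z2 < nfree z)%N.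

Lemma Sbox_splits_line z d c1 c2 : Sbox z -> free_at z c1 -> free_at z c2 ->
  (forall c, c != c1 -> c != c2 -> d c = 0) -> (d c1 <> 0 \/ d c2 <> 0) ->
  (forall t, bilin (shift z d t) = bilin z) -> Sbox_splits z.
Proof.
move=> [Q B] F1 F2 Sd Hd Hq.
have [t1 [T1 [B1 C1]]] := exit_step B F1 F2 Sd Hd.
have Sd' c : c != c1 -> c != c2 -> - d c = 0 by move=> n1 n2; rewrite Sd //; lra.
have [t2 [T2 [B2 C2]]] := exit_step (d := fun c => - d c) B F1 F2 Sd'
  ltac:(case: Hd => H; [left|right]; lra).
exists (shift z d t1), (shift z (fun c => - d c) t2), (t2 / (t1 + t2)).
split.
  split; first by apply/Rlt_le/Rdiv_lt_0_compat; lra.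
  by apply/Rle_divl; lra.
split; first by move=> c; rewrite /shift; field; lra.
split; first by split; rewrite ?Hq.
split; last by split.
split => //; rewrite -Q -(Hq (- t2)); congr bilin.
by apply: functional_extensionality => c; rewrite /shift; lra.
Qed.

Definition side (b : bool) k : 'I_(N + N) := if b then lshift N k else rshift N k.

Lemma bilin_shift b z d t : (forall k, d (side (~~ b) k) = 0) ->
  bilin (shift z d t) = bilin z + t * rsum (fun k => a k * d (side b k) * z (side (~~ b) k)).
Proof.
move=> H; rewrite /bilin -rsum_scal -rsum_add; apply: rsum_ext => k.
by case: b H => /(_ k) /= H; rewrite /shift /side H; ring.
Qed.

(* The direction P e_i - Q e_j on side b, with P = a_j z'_j and Q = a_i z'_i
   read on the other side z', keeps the bilinear form constant; if P = Q = 0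
   the direction e_i does. *)
Lemma Sbox_splits_side b z i j : Sbox z -> i != j ->
  free_at z (side b i) -> free_at z (side b j) -> Sbox_splits z.
Proof.
move=> Sz ij Fi Fj.
have side_inj k k' : (side b k == side b k') = (k == k').
  by rewrite /side; case: (b); rewrite ?eq_lshift ?eq_rshift.
have side_neq k k' : (side (~~ b) k == side b k') = false.
  by rewrite /side; case: (b); rewrite ?eq_lrshift ?eq_rlshift.
pose P := a j * z (side (~~ b) j); pose Q := a i * z (side (~~ b) i).
pose d0 : R := if pbool (P = 0 /\ Q = 0) then 1 else P.
pose d1 : R := if pbool (P = 0 /\ Q = 0) then 0 else - Q.
apply: (Sbox_splits_line (d := fun c => if c == side b i then d0 else if c == side b j then d1 else 0)
  Sz Fi Fj).
- by move=> c /negbTE -> /negbTE ->.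
- rewrite eqxx side_inj (eq_sym j i) (negbTE ij) eqxx /d0 /d1.
  case: pboolP => [_|PQ]; [left; lra|].
  by case: (Req_dec P 0) => HP; [right | left] => // HQ; apply: PQ; split; lra.
move=> t; rewrite (@bilin_shift b) => [|k]; last by rewrite !side_neq.
rewrite (rsum_ext (G := fun k => (a k * z (side (~~ b) k)) *
  (if k == i then d0 else if k == j then d1 else 0))) => [|k]; last first.
  by rewrite !side_inj; case: (k == i); case: (k == j); ring.
rewrite rsum_pick2 // -/P -/Q /d0 /d1.
by case: pboolP => [[P0 Q0]|_]; rewrite ?Q0; ring.
Qed.

Definition pinned (z : vec (N + N)) c := z c = lo c \/ z c = hi c \/ z c = 0.

Lemma free_of_unpinned z c : lo c <= z c <= hi c -> ~ pinned z c -> free_at z c.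
Proof. by move=> B H; apply/pboolP; split; apply: NNPP => K; apply: H; rewrite /pinned; lra. Qed.

Lemma pinned_of_not_free z c : lo c <= z c <= hi c -> ~~ free_at z c -> z c = lo c \/ z c = hi c.
Proof.
move=> B /pboolP F; case: (Req_dec (z c) (lo c)) => [|ne]; [by left | right].
by apply: NNPP => ne'; apply: F; lra.
Qed.

Definition code3 (v l u : R) : 'I_3 :=
  if pbool (v = l) then @Ordinal 3 0 isT else if pbool (v = u) then @Ordinal 3 1 isT
  else @Ordinal 3 2 isT.

Lemma code3P v l u : v = l \/ v = u \/ v = 0 -> pick3 l u (code3 v l u) = v.
Proof. by rewrite /code3 /pick3; do 2 case: pboolP => //=; lra. Qed.

Lemma lin_piece_pinned z : Sbox z ->
  (forall k, pinned z (lshift N k) \/ pinned z (rshift N k)) -> exists md, lin_piece md 1 z.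
Proof.
move=> [Q B] Hp.
pose px k := pbool (pinned z (lshift N k)); pose py k := pbool (pinned z (rshift N k)).
pose fr k : 'I_3 := if px k then (if py k then @Ordinal 3 2 isT else @Ordinal 3 1 isT)
                    else @Ordinal 3 0 isT.
pose md : mode := [ffun k => (code3 (z (lshift N k)) (xl k) (xu k),
                              code3 (z (rshift N k)) (yl k) (yu k), fr k)].
have XF k : xfree md k = ~~ px k by rewrite /xfree ffunE /fr; case: (px k); case: (py k).
have YF k : yfree md k = px k && ~~ py k by rewrite /yfree ffunE /fr; case: (px k); case: (py k).
have VX k : px k -> xval md k = z (lshift N k).
  by move=> /pboolP; rewrite /xval ffunE /pinned /lo /hi !gcatL; apply: code3P.
have VY k : ~~ yfree md k -> yval md k = z (rshift N k).
  rewrite YF negb_and negbK /yval ffunE => H; apply: code3P.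
  suff : pinned z (rshift N k) by rewrite /pinned /lo /hi !gcatR.
  by case/orP: H => [/pboolP Hx | /pboolP //]; case: (Hp k).
exists md; split; first by move=> c; have := B c; lra.
split; first lra.
split; first by move=> k; rewrite XF; case Ex: (px k) => //=; rewrite VX ?Ex //; lra.
split; first by move=> k; case Ey: (yfree md k) => //; rewrite VY ?Ey //; lra.
rewrite -Q /lin_form /bilin; apply: rsum_ext => k.
case Ex: (xfree md k); last by rewrite VX; [ring | move: Ex; rewrite XF => /negbFE].
have Ey : ~~ yfree md k by rewrite YF; move: Ex; rewrite XF => /negbTE ->.
by rewrite VY //; ring.
Qed.

Lemma hyp_arc_point i es et bd s t : 0 < s -> 0 < t -> hyp_k i es et bd = s * t ->
  slo i es <= s <= shi i es -> tlo i et <= t <= thi i et ->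
  hyp_arc (hyp_k i es et bd) (hyp_lo i es et bd) (hyp_hi i es et bd) 1 s t.
Proof.
move=> s0 t0 EK sr tr.
have T2 : 0 < thi i et by lra.
have Al : hyp_lo i es et bd <= s.
  by apply: Rmax_lub; [lra | rewrite EK; apply/Rle_divl => //; nra].
have Be : s <= hyp_hi i es et bd.
  rewrite /hyp_hi; case: Rlt_dec => T1 /=; last lra.
  by apply: Rmin_glb; [lra | rewrite EK; apply/Rle_divr => //; nra].
rewrite EK /hyp_arc !Rmult_1_l Rmult_1_r.
do 4 (split; first lra); split; last lra.
have : 0 <= t * ((s - hyp_lo i es et bd) * (hyp_hi i es et bd - s)).
  by apply: Rmult_le_pos; [lra | apply: Rmult_le_pos; lra].
lra.
Qed.

Lemma hyp_piece_single z i : Sbox z -> ~ pinned z (lshift N i) -> ~ pinned z (rshift N i) ->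
  (forall k, k != i -> ~~ free_at z (lshift N k) /\ ~~ free_at z (rshift N k)) ->
  exists es et bd, hyp_piece i es et bd 1 z.
Proof.
move=> [Q B] Px Py Oth.
pose x k := z (lshift N k); pose y k := z (rshift N k).
pose bd : corner := [ffun k => (pbool (x k = xu k), pbool (y k = yu k))].
have Bx k : xl k <= x k <= xu k by have := B (lshift N k); rewrite /lo /hi !gcatL.
have By k : yl k <= y k <= yu k by have := B (rshift N k); rewrite /lo /hi !gcatR.
have EX k : k != i -> xcorner bd k = x k.
  move=> /Oth [/(pinned_of_not_free (B _)) + _]; rewrite /xcorner ffunE /lo /hi !gcatL.
  by rewrite /x /=; case: pboolP => [-> //|ne] [-> //|E]; exfalso; apply: ne.
have EY k : k != i -> ycorner bd k = y k.
  move=> /Oth [_ /(pinned_of_not_free (B _))]; rewrite /ycorner ffunE /lo /hi !gcatR.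
  by rewrite /y /=; case: pboolP => [-> //|ne] [-> //|E]; exfalso; apply: ne.
pose es := pbool (0 < x i); pose et := pbool (0 < y i).
pose s := sgn es * x i; pose t := sgn et * y i.
have sp : 0 < s.
  have : x i <> 0 by move=> H; apply: Px; right; right.
  by rewrite /s /es /sgn; case: pboolP; lra.
have tp : 0 < t.
  have : y i <> 0 by move=> H; apply: Py; right; right.
  by rewrite /t /et /sgn; case: pboolP; lra.
have EK : hyp_k i es et bd = s * t.
  have Eq : a i * x i * y i + corner_rest i bd = 0.
    rewrite -Q /bilin (rsum_D1 i); congr (_ + _); apply: rsum_ext => k.
    by case: (eqVneq k i) => // ki; rewrite EX ?EY.
  rewrite /hyp_k /s /t; have -> : - corner_rest i bd / a i = x i * y i.
    by apply: (Rmult_eq_reg_l (a i)); [field_simplify; [lra | exact: a_neq0] | exact: a_neq0].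
  ring.
have arc := hyp_arc_point sp tp EK (proj1 (s_range es i (x i)) (Bx i))
  (proj1 (t_range et i (y i)) (By i)).
exists es, et, bd; rewrite /hyp_piece.
case: Rlt_dec => Kp; last by exfalso; apply: Kp; rewrite EK; nra.
split; first by move=> c; have := B c; lra.
split; first lra.
split; first by move=> k; case: eqP => // /eqP ki; rewrite EX // /x; lra.
by split; first by move=> k; case: eqP => // /eqP ki; rewrite EY // /y; lra.
Qed.

Definition piece_idx := (mode + ('I_N * bool * bool * corner))%type.

Definition piece (p : piece_idx) : R -> vec (N + N) -> Prop :=
  match p with
  | inl md => lin_piece md
  | inr h => hyp_piece h.1.1.1 h.1.1.2 h.1.2 h.2
  end.

Definition pieces := [seq piece p | p <- enum {: piece_idx}].

Lemma In_pieces K : List.In K pieces <-> exists p, K = piece p.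
Proof.
rewrite In_map; split=> [[p [_ <-]] | [p ->]]; first by exists p.
exists p; split => //; have : p \in enum {: piece_idx} by rewrite mem_enum.
by elim: (enum _) => //= q s IH; rewrite in_cons => /orP [/eqP ->|/IH]; auto.
Qed.

Lemma cone_pieces K : List.In K pieces -> cone K.
Proof. by move=> /In_pieces [[md|[[[i es] et] bd]] ->]; [exact: cone_lin_piece | exact: cone_hyp_piece]. Qed.

Lemma Sbox_piece z : Sbox z ->
  ~ (exists b i j, i != j /\ free_at z (side b i) /\ free_at z (side b j)) ->
  exists p, piece p 1 z.
Proof.
move=> Sz no_pair.
case: (classic (forall k, pinned z (lshift N k) \/ pinned z (rshift N k))) => [H|].
  by have [md ?] := lin_piece_pinned Sz H; exists (inl md).
move=> /not_all_ex_not [i /not_or_and [Px Py]].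
have free_side b : free_at z (side b i).
  by case: b; apply: free_of_unpinned => //; case: Sz.
have [es [et [bd ?]]] : exists es et bd, hyp_piece i es et bd 1 z.
  apply: hyp_piece_single => // k ki.
  by split; apply/negP => Fk; apply: no_pair; [exists true | exists false]; exists k, i.
by exists (inr (i, es, et, bd)).
Qed.

Lemma Sbox_cone_sum z : Sbox z -> cone_sum pieces 1 z.
Proof.
suff H n : forall z, (nfree z < n)%N -> Sbox z -> cone_sum pieces 1 z.
  exact: (H (nfree z).+1).
elim: n => [|n IH] {}z // Hn Sz; rewrite ltnS in Hn.
case: (classic (exists b i j, i != j /\ free_at z (side b i) /\ free_at z (side b j))).
  move=> [b [i [j [ij [Fi Fj]]]]].
  have [z1 [z2 [th [Hth [E [S1 [S2 [C1 C2]]]]]]]] := Sbox_splits_side Sz ij Fi Fj.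
  apply: (cone_sum_convex cone_pieces Hth E); apply: IH => //; exact: leq_trans Hn.
move=> /(Sbox_piece Sz) [p Hp].
by apply: (cone_sum_member (K := piece p)) => //; [exact: cone_pieces | apply/In_pieces; exists p].
Qed.

Lemma SOCr_cone_sum_pieces :
  SOCr (fun v : vec (1 + (N + N)) => cone_sum pieces (hd1 v) (vr v)).
Proof.
apply: SOCr_cone_sum => K /In_pieces [[md|[[[i es] et] bd]] ->].
  exact: SOCr_lin_piece.
exact: SOCr_hyp_piece.
Qed.

Lemma conv_Sbox_cone_sum z : conv Sbox z <-> cone_sum pieces 1 z.
Proof.
split; first exact: conv_cone_sum cone_pieces _ Sbox_cone_sum z.
have persp K : List.In K pieces -> forall l w, K l w ->
    0 <= l /\ (l = 0 -> forall c, w c = 0) /\ (0 < l -> conv Sbox (fun c => w c / l)).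
  by move=> /In_pieces [[md|[[[i es] et] bd]] ->]; [exact: lin_piece_persp | exact: hyp_piece_persp].
move=> /(cone_sum_persp (@convex_conv _ _) persp) [_ [_ /(_ Rlt_0_1)]].
congr conv; apply: functional_extensionality => c.
by rewrite /Rdiv Rinv_1 Rmult_1_r.
Qed.

Lemma conv_SboxE z : conv Sbox z <-> conv (S_a a xl xu yl yu) z.
Proof. by split; apply: conv_mono => p /SboxE. Qed.

End BilinearBox.

Theorem theorem2 (N : nat) (a xl xu yl yu : vec N) :
  (0 < N)%N ->
  (forall i, a i <> 0) ->
  (forall i, xl i < xu i) ->
  (forall i, yl i < yu i) ->
  SOC_representable (conv (S_a a xl xu yl yu)).
Proof.
move=> _ a_neq0 _ _; apply: SOCr_SOC_representable.
have affine_hom j : affine (fun z : vec (N + N) => vcat (fun _ : 'I_1 => 1) z j).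
  case: (split_ordP j) => j' ->.
    by apply: affine_ext (affine_const _ 1) => x; rewrite gcatL.
  by apply: affine_ext (affine_coord j') => x; rewrite gcatR.
apply: SOCr_ext (SOCr_comp affine_hom (SOCr_cone_sum_pieces a xl xu yl yu)) => z.
by rewrite /hd1 gcatL vr_vcat -conv_Sbox_cone_sum // conv_SboxE.
Qed.
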